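(* Let $n\ge 2$ and $1\le s\le n-1$ be integers, and let ${\bf A}=(a(i,j))_{1\le i,j\le n}$ be a real $n\times n$ matrix such that $a(i,j)\ne 0$ for every pair $(i,j)$ satisfying either $i\le j\le \min(i+n-s,n)$ or $j+s\le i$. Then the $2n\times 2n$ matrix ${\bf A}_{\rm sde}$ associated with ${\bf A}$ (defined below) has $1$ as a simple eigenvalue, and all of its other eigenvalues lie in the open unit disk $\{z\in\mathbb{C}: |z|<1\}$.
   Context: For a real number $t$, $t_+=\max(t,0)$. For a real $n\times n$ matrix ${\bf A}=(a(i,j))$ with no zero row, define the decoding weights $w_i=\big(\sum_{j=1}^n |a(i,j)|\big)^{-1}$, $1\le i\le n$, the normalized entries $\tilde a(i,j)=w_i\,a(i,j)$, the $n\times n$ matrices $\tilde{\bf A}_+=\big((\tilde a(i,j))_+\big)_{i,j}$ and $\tilde{\bf A}_-=\big((-\tilde a(i,j))_+\big)_{i,j}$, and the $2n\times 2n$ (row stochastic) block matrix $${\bf A}_{\rm sde}=\begin{pmatrix}\tilde{\bf A}_+ & \tilde{\bf A}_-\\ \tilde{\bf A}_+ & \tilde{\bf A}_-\end{pmatrix}.$$ *)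

From HB Require Import structures.
From mathcomp Require Import all_boot all_order all_algebra.
From mathcomp Require Import reals.
From mathcomp.real_closed Require Import complex.
Set Implicit Arguments. Unset Strict Implicit. Unset Printing Implicit Defensive.
Import Order.TTheory GRing.Theory Num.Theory.
Local Open Scope ring_scope.

Section Sde.
Variables (R : realType) (n : nat).
Implicit Type A : 'M[R]_n.

Definition dec_weight A (i : 'I_n) : R := (\sum_(j < n) `|A i j|)^-1.

Definition Atilde A : 'M[R]_n := \matrix_(i, j) (dec_weight A i * A i j).

Definition pos_part (t : R) : R := Num.max t 0.

Definition Atilde_plus A : 'M[R]_n := \matrix_(i, j) pos_part (Atilde A i j).
Definition Atilde_minus A : 'M[R]_n := \matrix_(i, j) pos_part (- Atilde A i j).

Definition A_sde A : 'M[R]_(n + n) :=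
  block_mx (Atilde_plus A) (Atilde_minus A) (Atilde_plus A) (Atilde_minus A).

End Sde.

Definition cplx_mx (R : realType) (m : nat) (B : 'M[R]_m) : 'M[R[i]]_m :=
  map_mx (fun x => (x%:C)%C) B.

From HB Require Import structures.
From mathcomp Require Import all_boot all_order all_algebra.
From mathcomp Require Import reals.
From mathcomp.real_closed Require Import complex.
From mathcomp Require Import zify.
Import Order.TTheory GRing.Theory Num.Theory.
Set Implicit Arguments. Unset Strict Implicit. Unset Printing Implicit Defensive.
Local Open Scope ring_scope.

(* With P := Atilde_plus A and M := Atilde_minus A, the matrix A_sde is
   [P M; P M] and P + M = Q := |Atilde A|, so that char A_sde = char Q * X^n.
   Q is nonnegative, row-stochastic, has a positive diagonal, and the
   hypothesis on A makes Q i (i+1 mod n) positive, so Q is irreducible.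
   Gershgorin's disk |z - q_ii| <= 1 - q_ii, taken at a row where an
   eigenvector has maximal modulus, meets the unit circle only at 1.
   By the maximum principle, Q u = u + c 1 forces c = 0 and u constant,
   which rules out a Jordan block for 1; this is checked over R and
   transported to R[i]. *)

Lemma char_poly_trmx (R : comNzRingType) n (G : 'M[R]_n) :
  char_poly G^T = char_poly G.
Proof.
rewrite /char_poly -det_tr; congr (\det _).
by apply/matrixP=> i j; rewrite !mxE eq_sym.
Qed.

Lemma char_poly_conj (R : comUnitRingType) n (S G : 'M[R]_n) : S \in unitmx ->
  char_poly (S *m G *m invmx S) = char_poly G.
Proof.
move=> uS; rewrite /char_poly.
have -> : char_poly_mx (S *m G *m invmx S) =
    map_mx polyC S *m char_poly_mx G *m map_mx polyC (invmx S).
  rewrite /char_poly_mx mulmxBr mulmxBl -!map_mxM mul_mx_scalar -scalemxAl.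
  by rewrite -map_mxM mulmxV // map_mx1 scalemx1.
by rewrite !det_mulmx mulrC mulrA -det_mulmx -map_mxM mulVmx // map_mx1 det1 mul1r.
Qed.

Lemma char_poly_block_dup (R : comNzRingType) n (P M : 'M[R]_n) :
  char_poly (block_mx P M P M) = char_poly (P + M) * 'X^n.
Proof.
pose L : 'M[{poly R}]_(n + n) := block_mx 1 0 (-1) 1.
pose U : 'M[{poly R}]_(n + n) := block_mx 1 0 1 1.
have -> : char_poly (block_mx P M P M) =
    \det (L *m char_poly_mx (block_mx P M P M) *m U).
  by rewrite !det_mulmx !det_lblock !det1 !mulr1 mul1r.
rewrite /char_poly_mx map_block_mx (scalar_mx_block n n) opp_block_mx add_block_mx.
rewrite !mulmx_block !(mul1mx, mulmx1, mul0mx, mulmx0, addr0, add0r, mulNmx) opprK.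
set X := 'X%:M; set mP := map_mx _ P; set mM := map_mx _ M.
have -> : mM + (X - mM) = X by rewrite addrC subrK.
have -> : - (X - mP) - mP + X = 0.
  by rewrite opprB [mP - X - mP]addrAC subrr add0r addNr.
by rewrite det_ublock det_scalar /char_poly /char_poly_mx map_mxD opprD addrA.
Qed.

Lemma char_poly_block_scalar (R : comNzRingType) m (a : R) (b : 'cV_m)
    (C : 'M_m) :
  char_poly (block_mx (a%:M : 'M_1) 0 b C) = ('X - a%:P) * char_poly C.
Proof.
rewrite /char_poly /char_poly_mx map_block_mx (scalar_mx_block 1 m).
rewrite opp_block_mx add_block_mx map_mx0 oppr0 addr0.
by rewrite det_lblock det_mx11 !mxE mulr1n.
Qed.

Lemma mup0 (F : fieldType) (x : F) : mup x 0 = 0%N.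
Proof.
rewrite /mup; case: arg_maxnP => // -[k k_lt1] _ _ /=.
by move: k_lt1; rewrite size_poly0 ltnS leqn0 => /eqP ->.
Qed.

Lemma mup_map (F : fieldType) (K : fieldType) (f : {rmorphism F -> K}) x p :
  mup (f x) (map_poly f p) = mup x p.
Proof.
have [->|p0] := eqVneq p 0; first by rewrite rmorph0 !mup0.
have fp0 : map_poly f p != 0 by rewrite map_poly_eq0.
apply/eqP; rewrite eqn_leq mup_leq // mup_geq //.
by rewrite -map_polyXsubC -!rmorphXn !dvdp_map -mup_leq // -mup_geq // !leqnn.
Qed.

Lemma mup_char_poly_eq1 (F : fieldType) N (G : 'M[F]_N) a : (0 < N)%N ->
  (const_mx 1 : 'rV[F]_N) *m G = a *: const_mx 1 ->
  (forall (u : 'rV_N) c, u *m G = a *: u + c *: const_mx 1 ->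
     exists l, u = l *: const_mx 1) ->
  mup a (char_poly G) = 1%N.
Proof.
(* In the basis S whose first row is const_mx 1, G becomes lower block
   triangular with corner a; an eigenvector w of the other diagonal block
   for a would give the generalized eigenvector row_mx 0 w. *)
case: N G => // m G _ eG eG_gen.
pose e : 'rV[F]_(1 + m) := const_mx 1.
have eE : e = row_mx 1 (const_mx 1).
  by apply/matrixP=> i j; rewrite !mxE; case: split => k; rewrite ?mxE ?ord1.
pose S : 'M[F]_(1 + m) := col_mx e (row_mx 0 1%:M).
have uS : S \in unitmx.
  by rewrite /S eE -block_mxEv unitmxE det_ublock !det1 mul1r unitr1.
pose T := S *m G *m invmx S.
have eS : row_mx 1 0 *m S = e by rewrite mul_row_col mul1mx mul0mx addr0.
have Ttop : usubmx T = row_mx a%:M 0.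
  rewrite /T !mul_col_mx col_mxKu eG -/e -scalemxAl -{1}eS -mulmxA mulmxV // mulmx1.
  by rewrite scale_row_mx scaler0 scalemx1.
pose dl := lsubmx (dsubmx T); pose C := rsubmx (dsubmx T).
have TE : T = block_mx a%:M 0 dl C.
  by rewrite block_mxEv -Ttop hsubmxK vsubmxK.
have charT : char_poly G = ('X - a%:P) * char_poly C.
  by rewrite -(char_poly_conj G uS) -/T TE char_poly_block_scalar.
have nz_charC : char_poly C != 0 by apply/monic_neq0/char_poly_monic.
rewrite charT mupM ?polyXsubC_eq0 // -[_ - _]expr1 mup_XsubCX eqxx mupNroot //.
apply/negP; rewrite -eigenvalue_root_char => /eigenvalueP [w wC nz_w].
pose u : 'rV_(1 + m) := row_mx 0 w.
have wS : w *m row_mx 0 1%:M = u by rewrite mul_mx_row mulmx0 mulmx1.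
have uS0 : u *m S = u by rewrite mul_row_col mul0mx add0r wS.
have uG : u *m G = a *: u + (w *m dl) 0 0 *: e.
  have TS : S *m G = T *m S by rewrite /T -mulmxA mulVmx // mulmx1.
  rewrite -{1}uS0 -mulmxA TS mulmxA TE mul_row_block !mul0mx !add0r wC.
  rewrite mul_row_col addrC -scalemxAl wS; congr (_ + _).
  by rewrite {1}[w *m dl]mx11_scalar mul_scalar_mx.
have [l ul] := eG_gen _ _ uG.
have /eq_row_mx [l0 w_l] :
    row_mx 0 w = row_mx (l *: 1) (l *: const_mx 1).
  by rewrite -scale_row_mx -eE; exact: ul.
have {l0} l_eq0 : l = 0 by move/matrixP/(_ 0 0): l0; rewrite !mxE /= mulr1.
by move: nz_w; rewrite w_l l_eq0 scale0r eqxx.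
Qed.

Section Stochastic.
Variables (R : realDomainType) (n : nat) (Q : 'M[R]_n).
Hypotheses (Q_ge0 : forall i j, 0 <= Q i j) (Q_row1 : forall i, \sum_j Q i j = 1).

Lemma stochastic_avg_le_max (y : 'I_n -> R) i :
  (forall j, y j <= y i) -> \sum_j Q i j * y j <= y i.
Proof.
move=> y_max; rewrite -[leRHS]mul1r -(Q_row1 i) mulr_suml.
by apply: ler_sum => j _; rewrite ler_wpM2l.
Qed.

Lemma stochastic_drift_eq0 (y : 'I_n -> R) c : (0 < n)%N ->
  (forall i, \sum_j Q i j * y j = y i + c) -> c = 0.
Proof.
move=> n_gt0.
have drift_le0 (x : 'I_n -> R) d : (forall i, \sum_j Q i j * x j = x i + d) -> d <= 0.
  move=> x_avg; have [i0 _ x_max] := @arg_maxP _ _ _ (Ordinal n_gt0) xpredT x isT.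
  by rewrite -(lerD2l (x i0)) addr0 -x_avg stochastic_avg_le_max // => j; apply: x_max.
move=> y_avg; apply/eqP; rewrite eq_le (drift_le0 y) //= -oppr_le0.
apply: (drift_le0 (fun j => - y j)) => i.
by under eq_bigr do rewrite mulrN; rewrite sumrN y_avg opprD.
Qed.

Lemma stochastic_harmonic_const (y : 'I_n -> R) :
  (forall i j, connect [rel i j | 0 < Q i j] i j) ->
  (forall i, \sum_j Q i j * y j = y i) -> forall i j, y i = y j.
Proof.
move=> Q_conn y_avg i j.
have [M [i0 yi0 y_max]] : exists M, exists2 i0, y i0 = M & forall k, y k <= M.
  have [i0 _ y_max] := @arg_maxP _ _ _ i xpredT y isT.
  by exists (y i0), i0 => // k; apply: y_max.
have max_closed k l : y k = M -> 0 < Q k l -> y l = M.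
  move=> yk Qkl; apply/eqP; rewrite eq_sym -subr_eq0.
  have gap_ge0 m : true -> 0 <= Q k m * (M - y m).
    by move=> _; rewrite mulr_ge0 // subr_ge0.
  have gap_sum : \sum_m Q k m * (M - y m) = 0.
    under eq_bigr do rewrite mulrBr.
    by rewrite sumrB -mulr_suml Q_row1 mul1r y_avg yk subrr.
  move: (@psumr_eq0P _ _ _ _ gap_ge0 gap_sum l isT) => /eqP.
  by rewrite mulf_eq0 gt_eqF.
have y_top l : y l = M.
  have /connectP [p] := Q_conn i0 l.
  elim: p i0 yi0 => [|k p IHp] x yx /=; first by move=> _ ->.
  by case/andP => Qxk; apply: IHp; apply: max_closed Qxk.
by rewrite !y_top.
Qed.
End Stochastic.

Lemma stochastic_mup_char_poly1 (R : realFieldType) n (Q : 'M[R]_n) : (0 < n)%N ->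
  (forall i j, 0 <= Q i j) -> (forall i, \sum_j Q i j = 1) ->
  (forall i j, connect [rel i j | 0 < Q i j] i j) ->
  mup 1 (char_poly Q) = 1%N.
Proof.
move=> n_gt0 Q_ge0 Q_row1 Q_conn; rewrite -char_poly_trmx.
have QT_mul (u : 'rV_n) i : (u *m Q^T) 0 i = \sum_j Q i j * u 0 j.
  by rewrite mxE; apply: eq_bigr => j _; rewrite mxE mulrC.
apply: mup_char_poly_eq1 => // [|u c uQ].
  apply/matrixP=> r i; rewrite ord1 QT_mul !mxE mulr1 -[RHS](Q_row1 i).
  by apply: eq_bigr => j _; rewrite mxE mulr1.
have u_avg i : \sum_j Q i j * u 0 j = u 0 i + c.
  by rewrite -QT_mul uQ !mxE mul1r mulr1.
have c0 := stochastic_drift_eq0 Q_ge0 Q_row1 n_gt0 u_avg.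
have u_const := stochastic_harmonic_const Q_ge0 Q_row1 Q_conn.
exists (u 0 (Ordinal n_gt0)); apply/matrixP=> i j.
by rewrite ord1 !mxE mulr1; apply: u_const => k; rewrite u_avg c0 addr0.
Qed.

Lemma norm_lt1_of_disk (C : numClosedFieldType) (z q : C) : 0 < q ->
  `|z - q| <= 1 - q -> z != 1 -> `|z| < 1.
Proof.
move=> q_gt0 zq_le zN1.
have z_le1 : `|z| <= 1.
  rewrite -(subrK q z); apply: le_trans (ler_normD (z - q) q) _.
  by rewrite (gtr0_norm q_gt0) -lerBrDr.
rewrite lt_neqAle z_le1 andbT; apply: contraNneq zN1 => z1.
have zD : `|(z - q) + q| = `|z - q| + `|q|.
  apply/eqP; rewrite eq_le ler_normD subrK z1 (gtr0_norm q_gt0) -lerBrDr.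
  exact: zq_le.
have [t _ [zq qt]] := normCDeq zD.
have t1 : t = 1.
  apply: (mulfI (lt0r_neq0 q_gt0)).
  by rewrite mulr1 {2}qt (gtr0_norm q_gt0).
have z_ge0 : 0 <= z.
  by rewrite -(subrK q z) zq t1 mulr1 addr_ge0 // ltW.
by rewrite -z1 ger0_norm.
Qed.

Lemma stochastic_eigenvalue_norm_lt1 (R : rcfType) n (Q : 'M[R]_n) (z : R[i]) :
  (forall i j, 0 <= Q i j) -> (forall i, \sum_j Q i j = 1) ->
  (forall i, 0 < Q i i) ->
  eigenvalue (map_mx (real_complex R) Q) z -> z != 1 -> `|z| < 1.
Proof.
move=> Q_ge0 Q_row1 Q_diag.
rewrite eigenvalue_root_char -char_poly_trmx -eigenvalue_root_char.
move=> /eigenvalueP [v vQ nz_v] zN1.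
have v_eig i : \sum_j (Q i j)%:C%C * v 0 j = z * v 0 i.
  move/matrixP/(_ 0 i): vQ; rewrite !mxE => <-.
  by apply: eq_bigr => j _; rewrite !mxE mulrC.
have [i1 vi1_neq0] : exists i, v 0 i != 0.
  apply/existsP; apply: contraNT nz_v => /existsPn v0.
  by apply/eqP/matrixP=> r i; rewrite ord1 mxE; apply/eqP/negPn/v0.
(* R[i] is only partially ordered: maximize the real number Re |v i|. *)
pose nv i := complex.Re `|v 0 i|.
have nvE i : `|v 0 i| = (nv i)%:C%C by rewrite /nv normc_def.
have [i0 _ nv_max] := @arg_maxP _ _ _ i1 xpredT nv isT.
have v_le j : `|v 0 j| <= `|v 0 i0| by rewrite !nvE lecR; apply: nv_max.
have vi0_gt0 : 0 < `|v 0 i0| by apply: lt_le_trans (v_le i1); rewrite normr_gt0.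
apply: (@norm_lt1_of_disk _ _ (Q i0 i0)%:C%C) zN1; first by rewrite ltcR.
rewrite -(ler_pM2r vi0_gt0) -normrM.
have -> : (z - (Q i0 i0)%:C%C) * v 0 i0 = \sum_(j | j != i0) (Q i0 j)%:C%C * v 0 j.
  by rewrite mulrBl -v_eig (bigD1 i0) //= addrAC subrr add0r.
apply: le_trans (ler_norm_sum _ _ _) _.
have -> : (1 - (Q i0 i0)%:C%C) = \sum_(j | j != i0) (Q i0 j)%:C%C.
  rewrite -rmorph_sum -(rmorph1 (real_complex R)) -rmorphB -(Q_row1 i0).
  by rewrite (bigD1 i0) //= addrAC subrr add0r.
rewrite mulr_suml; apply: ler_sum => j _.
by rewrite normrM ger0_norm ?ler0c // ler_wpM2l ?ler0c.
Qed.

Lemma connect_ordS n (e : rel 'I_n) :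
  (forall i, e i (ordS i)) -> forall i j, connect e i j.
Proof.
case: n e => [e _ [] //|n e e_ordS].
have iter_ordS (k : 'I_n.+1) : iter k (@ordS n.+1) ord0 = k.
  case: k => k; elim: k => [|k IHk] k_lt; apply: val_inj => //=.
  by rewrite IHk ?(ltnW k_lt) //= modn_small.
have conn0 j : fconnect (@ordS n.+1) ord0 j.
  by have := fconnect_iter (@ordS n.+1) j ord0; rewrite iter_ordS.
move=> i j; apply: (connect_sub (e := frel (@ordS n.+1))).
  by move=> x _ /eqP <-; apply: connect1.
by apply: connect_trans (conn0 j); rewrite fconnect_sym //; apply: ordS_inj.
Qed.

Lemma pos_partDN (R : realType) (t : R) : pos_part t + pos_part (- t) = `|t|.
Proof.
rewrite /pos_part /Num.max oppr_lt0; case: (ltrgtP t 0) => [t_lt0|t_gt0|->].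
- by rewrite add0r ltr0_norm.
- by rewrite addr0 gtr0_norm.
- by rewrite oppr0 addr0 normr0.
Qed.

Lemma Atilde_plusD_minus (R : realType) n (A : 'M[R]_n) :
  Atilde_plus A + Atilde_minus A = map_mx Num.norm (Atilde A).
Proof. by apply/matrixP=> i j; rewrite !mxE pos_partDN. Qed.

Section NormalizedRows.
Variables (R : realType) (n : nat) (A : 'M[R]_n) (i k : 'I_n).
Hypothesis Aik_neq0 : A i k != 0.

Lemma dec_weight_gt0 : 0 < dec_weight A i.
Proof.
by rewrite invr_gt0 (bigD1 k) //= ltr_pwDl ?normr_gt0 // sumr_ge0.
Qed.

Lemma norm_AtildeE j : `|Atilde A i j| = dec_weight A i * `|A i j|.
Proof. by rewrite mxE normrM gtr0_norm // dec_weight_gt0. Qed.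

Lemma sum_norm_Atilde : \sum_j `|Atilde A i j| = 1.
Proof.
under eq_bigr do rewrite norm_AtildeE.
by rewrite -mulr_sumr mulVf // lt0r_neq0 // -invr_gt0 dec_weight_gt0.
Qed.

Lemma norm_Atilde_gt0 j : (0 < `|Atilde A i j|) = (A i j != 0).
Proof. by rewrite norm_AtildeE pmulr_rgt0 ?normr_gt0 // dec_weight_gt0. Qed.

End NormalizedRows.

Theorem proposition1 (R : realType) (n s : nat) (A : 'M[R]_n) :
  (2 <= n)%N -> (1 <= s)%N -> (s <= n - 1)%N ->
  (forall i j : 'I_n,
     ((i <= j)%N && (j <= i + (n - s))%N) || (j + s <= i)%N -> A i j != 0) ->
  let B := cplx_mx (A_sde A) in
  [/\ eigenvalue B 1,
      mup 1 (char_poly B) = 1%N &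
      forall z : R[i], eigenvalue B z -> z != 1 -> `|z| < 1].
Proof.
move=> n_ge2 _ s_le HA B.
have A_diag i : A i i != 0 by apply: HA; rewrite leqnn leq_addr.
pose Q := map_mx Num.norm (Atilde A).
have Q_ge0 i j : 0 <= Q i j by rewrite mxE.
have Q_row1 i : \sum_j Q i j = 1.
  by under eq_bigr do rewrite mxE; apply: sum_norm_Atilde (A_diag i).
have Q_diag i : 0 < Q i i by rewrite mxE (norm_Atilde_gt0 (A_diag i)).
have Q_conn : forall i j, connect [rel i j | 0 < Q i j] i j.
  apply: connect_ordS => i; rewrite /= mxE (norm_Atilde_gt0 (A_diag i)).
  apply: HA => /=; have := ltn_ord i; rewrite leq_eqVlt => /orP [/eqP i_n|i_lt].
    by rewrite i_n modnn; lia.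
  by rewrite modn_small //; lia.
have charB : char_poly B = map_poly (real_complex R) (char_poly Q) * 'X^n.
  rewrite /B /cplx_mx -map_char_poly char_poly_block_dup Atilde_plusD_minus.
  by rewrite rmorphM /= map_polyXn.
have mupB : mup 1 (char_poly B) = 1%N.
  rewrite charB mupMl; last by rewrite rootE hornerXn expr1n oner_eq0.
  rewrite -(rmorph1 (real_complex R)) mup_map stochastic_mup_char_poly1 //; lia.
split=> //.
- rewrite eigenvalue_root_char -dvdp_XsubCl XsubC_dvd ?mupB //.
  exact/monic_neq0/char_poly_monic.
- move=> z; rewrite eigenvalue_root_char charB rootM => /orP [].
    by rewrite map_char_poly -eigenvalue_root_char; apply: stochastic_eigenvalue_norm_lt1.
  by rewrite rootE hornerXn expf_eq0 => /andP [_ /eqP ->] _; rewrite normr0 ltr01.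
Qed.
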